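(* Let $x\in Y$. Then the orbit $W^v.x$ is bounded above for $\le_{Q^\vee}$ (i.e. there is $y\in Y$ with $z\le_{Q^\vee}y$ for all $z\in W^v.x$) if and only if $x\in Y^+$.
   Context: $I$ finite, $A=(a_{i,j})$ a generalized Cartan matrix, $X,Y$ dual free $\mathbb Z$-modules of finite rank with free families $(\alpha_i)\subset X$, $(\alpha_i^\vee)\subset Y$, $\alpha_j(\alpha_i^\vee)=a_{i,j}$; $\mathbb A=Y\otimes\mathbb R$; $r_i(v)=v-\alpha_i(v)\alpha_i^\vee$; $W^v=\langle r_i:i\in I\rangle$; $Q^\vee_+=\bigoplus\mathbb N\alpha_i^\vee$, $x\le_{Q^\vee}y$ iff $y-x\in Q^\vee_+$; $C^v_f=\{v:\alpha_i(v)>0\ \forall i\}$; Tits cone $\mathcal T=\bigcup_{w\in W^v}w\overline{C^v_f}$; $Y^+=Y\cap\mathcal T$. *)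

From HB Require Import structures.
From mathcomp Require Import all_boot all_order all_algebra.
Set Implicit Arguments. Unset Strict Implicit. Unset Printing Implicit Defensive.
Import Order.TTheory GRing.Theory Num.Theory.
Local Open Scope ring_scope.

(* Conventions: I = 'I_m; Y = Z^n realised as 'rV[int]_n; X = Z^n with the
   perfect (dot-product) pairing, so X is the dual of Y. A = Y (x) R is 'rV[R]_n. *)

Definition pairZ (n : nat) (a v : 'rV[int]_n) : int := \sum_(k < n) a 0 k * v 0 k.

Definition pairR (R : realFieldType) (n : nat) (a : 'rV[int]_n) (v : 'rV[R]_n) : R :=
  \sum_(k < n) (a 0 k)%:~R * v 0 k.

Definition cartan (m n : nat) (alpha alphav : 'I_m -> 'rV[int]_n) (i j : 'I_m) : int :=
  pairZ (alpha j) (alphav i).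

Definition is_GCM (m : nat) (A : 'I_m -> 'I_m -> int) : Prop :=
  [/\ (forall i, A i i = 2),
      (forall i j, i != j -> A i j <= 0) &
      (forall i j, A i j = 0 <-> A j i = 0)].

Definition free_family (m n : nat) (f : 'I_m -> 'rV[int]_n) : Prop :=
  forall c : 'I_m -> int, \sum_(i < m) c i *: f i = 0 -> forall i, c i = 0.

Definition rY (m n : nat) (alpha alphav : 'I_m -> 'rV[int]_n) (i : 'I_m)
  (v : 'rV[int]_n) : 'rV[int]_n :=
  v - pairZ (alpha i) v *: alphav i.

Definition rR (R : realFieldType) (m n : nat) (alpha alphav : 'I_m -> 'rV[int]_n)
  (i : 'I_m) (v : 'rV[R]_n) : 'rV[R]_n :=
  v - pairR (alpha i) v *: map_mx intr (alphav i).

(* Elements of W^v: products r_{i_1} ... r_{i_k} (the r_i are involutions, so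
   these words exhaust the generated group). *)
Definition wordY (m n : nat) (alpha alphav : 'I_m -> 'rV[int]_n) (s : seq 'I_m)
  (v : 'rV[int]_n) : 'rV[int]_n :=
  foldr (fun i w => rY alpha alphav i w) v s.

Definition wordR (R : realFieldType) (m n : nat) (alpha alphav : 'I_m -> 'rV[int]_n)
  (s : seq 'I_m) (v : 'rV[R]_n) : 'rV[R]_n :=
  foldr (fun i w => rR alpha alphav i w) v s.

Definition leQv (m n : nat) (alphav : 'I_m -> 'rV[int]_n) (x y : 'rV[int]_n) : Prop :=
  exists c : 'I_m -> nat, y - x = \sum_(i < m) (c i)%:Z *: alphav i.

Definition in_Cf (R : realFieldType) (m n : nat) (alpha : 'I_m -> 'rV[int]_n)
  (v : 'rV[R]_n) : Prop := forall i, 0 < pairR (alpha i) v.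

Definition in_closure_Cf (R : realFieldType) (m n : nat) (alpha : 'I_m -> 'rV[int]_n)
  (v : 'rV[R]_n) : Prop :=
  forall e : R, 0 < e -> exists u : 'rV[R]_n,
    in_Cf alpha u /\ (forall k, `|u 0 k - v 0 k| < e).

Definition in_Tits (R : realFieldType) (m n : nat) (alpha alphav : 'I_m -> 'rV[int]_n)
  (v : 'rV[R]_n) : Prop :=
  exists (s : seq 'I_m) (u : 'rV[R]_n), in_closure_Cf alpha u /\ v = wordR alpha alphav s u.

Arguments in_Tits : clear implicits.
Definition in_Yplus (R : realFieldType) (m n : nat) (alpha alphav : 'I_m -> 'rV[int]_n)
  (x : 'rV[int]_n) : Prop :=
  in_Tits R m n alpha alphav (map_mx intr x).
Arguments in_Yplus : clear implicits.

(* If x = w u with u in the closed fundamental chamber, then u = w^-1 x is an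
   integral dominant vector and it bounds its orbit: u - v u lies in Q^vee_+ for
   every v, by induction on a reduced word for v, since w alpha_i^vee lies in
   Q^vee_+ whenever w r_i is reduced. This positivity is reduced to the dihedral
   group generated by two simple reflections, where either the alternating words
   keep alpha_i^vee positive or a braid relation holds; parities of lengths are
   controlled by det r_i = -1.
   Conversely, if the orbit is bounded by y, an element z of the orbit of minimal
   height for y - z is dominant, since alpha_i(z) < 0 would make r_i z lower.
   A dominant integral vector lies in the closure of C^v_f, which is nonempty
   because the alpha_i are free, so x lies in the Tits cone. *)

From HB Require Import structures.
From mathcomp Require Import all_boot all_order all_algebra.
From mathcomp Require Import zify ring lra.
From Stdlib Require Import Classical.
Set Implicit Arguments. Unset Strict Implicit. Unset Printing Implicit Defensive.
Import Order.TTheory GRing.Theory Num.Theory.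
Local Open Scope ring_scope.

Lemma exists_minimal (P : nat -> Prop) k :
  P k -> exists l, P l /\ forall l', (l' < l)%N -> ~ P l'.
Proof.
elim/ltn_ind: k => k IH Pk.
have [[l [lt_lk Pl]]|no_smaller] := classic (exists l, (l < k)%N /\ P l).
  exact: IH Pl.
by exists k; split=> // l lt_lk Pl; apply: no_smaller; exists l.
Qed.

Lemma det_1_sub_rank1 (R : comNzRingType) n (a c : 'rV[R]_n) :
  \det (1%:M - a^T *m c) = 1 - (c *m a^T) 0 0.
Proof.
have E1 : block_mx 1%:M a^T c 1%:M =
    block_mx 1%:M 0 c 1%:M *m block_mx 1%:M a^T 0 (1%:M - c *m a^T).
  by rewrite mulmx_block !mul1mx !mul0mx ?mulmx1 ?mulmx0 ?addr0 ?add0r addrC subrK.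
have E2 : block_mx 1%:M a^T c 1%:M =
    block_mx (1%:M - a^T *m c) a^T 0 1%:M *m block_mx 1%:M 0 c 1%:M.
  by rewrite mulmx_block !mul1mx !mul0mx ?mulmx1 ?mulmx0 ?addr0 ?add0r subrK.
have := congr1 determinant (etrans (esym E1) E2).
rewrite !det_mulmx !det_lblock !det_ublock !det1 !mul1r !mulr1 => <-.
by rewrite det_mx11 !mxE eqxx.
Qed.

Section Pairing.
Variable n : nat.
Implicit Types a u v : 'rV[int]_n.

Lemma pairZE a v : pairZ a v = (v *m a^T) 0 0.
Proof. by rewrite /pairZ mxE; apply: eq_bigr => k _; rewrite mxE mulrC. Qed.

Lemma pairZD a u v : pairZ a (u + v) = pairZ a u + pairZ a v.
Proof. by rewrite !pairZE mulmxDl mxE. Qed.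

Lemma pairZZ a (k : int) v : pairZ a (k *: v) = k * pairZ a v.
Proof. by rewrite !pairZE -scalemxAl mxE. Qed.

Lemma pairZB a u v : pairZ a (u - v) = pairZ a u - pairZ a v.
Proof. by rewrite pairZD -scaleN1r pairZZ mulN1r. Qed.

Lemma pairZ0 a : pairZ a 0 = 0.
Proof. by rewrite pairZE mul0mx mxE. Qed.

End Pairing.

(* Words in two letters: true stands for r_i and false for r_j. Words act from
   the right end, so the last letter b of alt_word b L is applied first. *)
Fixpoint alt_word (b : bool) (L : nat) : seq bool :=
  if L is L'.+1 then rcons (alt_word (~~ b) L') b else [::].

Lemma size_alt_word b L : size (alt_word b L) = L.
Proof. by elim: L b => //= L IH b; rewrite size_rcons IH. Qed.

Lemma alt_word_addn b a c :
  alt_word b (a + c) = alt_word (b (+) odd c) a ++ alt_word b c.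
Proof.
elim: c b => [|c IH] b /=; first by rewrite addn0 cats0 addbF.
by rewrite addnS /= IH -rcons_cat addbN negb_add.
Qed.

Section RankTwoCoordinates.
Variables aij aji : int.

(* Coordinates (A, B) of v + A alpha_i^vee + B alpha_j^vee, where X = alpha_i(v),
   Y = alpha_j(v), aij = alpha_j(alpha_i^vee) and aji = alpha_i(alpha_j^vee). *)
Definition coord_reflI (X : int) (ab : int * int) := (- ab.1 - X - aji * ab.2, ab.2).
Definition coord_reflJ (Y : int) (ab : int * int) := (ab.1, - ab.2 - Y - aij * ab.1).

Fixpoint coord_word (X Y : int) (t : seq bool) (ab : int * int) : int * int :=
  if t is b :: t' then
    (if b then coord_reflI X else coord_reflJ Y) (coord_word X Y t' ab)
  else ab.

Lemma coord_word_rcons X Y t b ab :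
  coord_word X Y (rcons t b) ab =
  coord_word X Y t ((if b then coord_reflI X else coord_reflJ Y) ab).
Proof. by elim: t => //= c t ->. Qed.

Definition coord_braid (L : nat) := forall X Y,
  coord_word X Y (alt_word true L) (0, 0) = coord_word X Y (alt_word false L) (0, 0).

Definition alt_coord_ge0 (L : nat) :=
  0 <= (coord_word 0 0 (alt_word false L) (1, 0)).1 /\
  0 <= (coord_word 0 0 (alt_word false L) (1, 0)).2.

Hypotheses (aij_le0 : aij <= 0) (aji_le0 : aji <= 0).

(* Once aij aji >= 4, coord_reflJ maps the cone {a, b >= 0, -aji b <= 2a} into
   the cone {a, b >= 0, -aij a <= 2b}, and coord_reflI maps the latter back. *)
Lemma alt_coord_ge0_cone (prod_ge4 : 4 <= aij * aji) L :
  forall ab : int * int,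
  ((0 <= ab.1 /\ 0 <= ab.2 /\ - aji * ab.2 <= 2 * ab.1) ->
     0 <= (coord_word 0 0 (alt_word false L) ab).1 /\
     0 <= (coord_word 0 0 (alt_word false L) ab).2) /\
  ((0 <= ab.1 /\ 0 <= ab.2 /\ - aij * ab.1 <= 2 * ab.2) ->
     0 <= (coord_word 0 0 (alt_word true L) ab).1 /\
     0 <= (coord_word 0 0 (alt_word true L) ab).2).
Proof.
elim: L => [|L IH] [A B] /=; first by split=> [[? [? ?]]|[? [? ?]]].
rewrite !coord_word_rcons /=; split=> [[hA [hB hI]]|[hA [hB hI]]].
- by apply: (proj2 (IH _)) => /=; nia.
- by apply: (proj1 (IH _)) => /=; nia.
Qed.

End RankTwoCoordinates.

(* The finite rank-two types A1xA1, A2, B2, G2: r_i r_j has order 2, 3, 4, 6. *)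
Lemma rank2_finite_braid (aij aji : int) :
  aij <= 0 -> aji <= 0 -> (aij == 0) = (aji == 0) -> aij * aji < 4 ->
  exists2 L, (0 < L)%N &
    coord_braid aij aji L /\ forall k, (k < L)%N -> alt_coord_ge0 aij aji k.
Proof.
move=> aij_le0 aji_le0 aij_aji_eq0 prod_lt4.
have cartan_cases : (aij = 0 /\ aji = 0) \/ (-3 <= aij <= -1 /\ -3 <= aji <= -1).
  have [aij0|aij_neq0] := eqVneq aij 0.
    by left; split=> //; apply/eqP; rewrite -aij_aji_eq0 aij0.
  right; move: aij_aji_eq0; rewrite (negbTE aij_neq0) => /esym/negbT aji_neq0.
  by split; apply/andP; split; nia.
case: cartan_cases => [[-> ->]|[aij_bnd aji_bnd]].
- exists 2%N => //; split=> [X Y|k]; last by do 2 case: k => [|k] //.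
  by rewrite /= /coord_reflI /coord_reflJ /=; congr pair; ring.
- move: prod_lt4.
  have : aji = -1 \/ aji = -2 \/ aji = -3 by lia.
  have : aij = -1 \/ aij = -2 \/ aij = -3 by lia.
  move=> [->|[->|->]] [->|[->|->]] //= _;
    [exists 3%N | exists 4%N | exists 6%N | exists 4%N | exists 6%N] => //.
  all: split=> [X Y|k]; last by do 6 case: k => [|k] //.
  all: by rewrite /= /coord_reflI /coord_reflJ /=; congr pair; ring.
Qed.

Lemma rank2_dichotomy (aij aji : int) k :
  aij <= 0 -> aji <= 0 -> (aij == 0) = (aji == 0) ->
  alt_coord_ge0 aij aji k \/ exists2 L, (0 < L <= k)%N & coord_braid aij aji L.
Proof.
move=> aij_le0 aji_le0 aij_aji_eq0.
have [prod_ge4|prod_lt4] := lerP 4 (aij * aji).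
  by left; apply: (proj1 (alt_coord_ge0_cone aij_le0 aji_le0 prod_ge4 k (1, 0))) => /=; lia.
have [L L_gt0 [braid_L ge0_below]] :=
  rank2_finite_braid aij_le0 aji_le0 aij_aji_eq0 prod_lt4.
have [k_lt_L|L_le_k] := ltnP k L; first by left; apply: ge0_below.
by right; exists L; rewrite ?L_gt0.
Qed.

Section Reflections.
Variables (m n : nat) (alpha alphav : 'I_m -> 'rV[int]_n).
Local Notation word := (wordY alpha alphav).
Implicit Types (s t : seq 'I_m) (u v : 'rV[int]_n).

Definition refl_mx i : 'M[int]_n := 1%:M - (alpha i)^T *m alphav i.

Definition word_mx s : 'M[int]_n := foldr (fun i M => M *m refl_mx i) 1%:M s.

Lemma rY_mx i v : rY alpha alphav i v = v *m refl_mx i.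
Proof.
rewrite /rY /refl_mx mulmxBr mulmx1 mulmxA pairZE; congr (_ - _).
by rewrite [v *m _^T]mx11_scalar mul_scalar_mx mxE eqxx mulr1n.
Qed.

Lemma wordY_mx s v : word s v = v *m word_mx s.
Proof. by elim: s => [|i s IH] /=; rewrite ?mulmx1 // IH rY_mx mulmxA. Qed.

Lemma wordYD s u v : word s (u + v) = word s u + word s v.
Proof. by rewrite !wordY_mx mulmxDl. Qed.

Lemma wordYZ s (k : int) v : word s (k *: v) = k *: word s v.
Proof. by rewrite !wordY_mx scalemxAl. Qed.

Lemma wordYB s u v : word s (u - v) = word s u - word s v.
Proof. by rewrite !wordY_mx mulmxBl. Qed.

Lemma wordY_cat s t v : word (s ++ t) v = word s (word t v).
Proof. by rewrite /wordY foldr_cat. Qed.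

Lemma wordY_rcons s i v : word (rcons s i) v = word s (rY alpha alphav i v).
Proof. by rewrite -cats1 wordY_cat. Qed.

Definition word_equiv s t := forall v, word s v = word t v.

Lemma word_equiv_catl p s t : word_equiv s t -> word_equiv (p ++ s) (p ++ t).
Proof. by move=> st v; rewrite !wordY_cat st. Qed.

Lemma word_equiv_rcons s t i :
  word_equiv s t -> word_equiv (rcons s i) (rcons t i).
Proof. by move=> st v; rewrite !wordY_rcons st. Qed.

Definition reduced s := forall t, word_equiv t s -> (size s <= size t)%N.

Lemma reduced_catr s t : reduced (s ++ t) -> reduced t.
Proof.
move=> red_st t' t't; have := red_st (s ++ t') (word_equiv_catl s t't).
by rewrite !size_cat leq_add2l.
Qed.

Lemma reduced_rcons s i : reduced (rcons s i) -> reduced s.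
Proof.
move=> red_si t ts; have := red_si _ (word_equiv_rcons i ts).
by rewrite !size_rcons.
Qed.

Lemma reduced_equiv s t : reduced s -> word_equiv t s -> size t = size s -> reduced t.
Proof. by move=> red_s ts eq_size t' t't; rewrite eq_size; apply: red_s => v; rewrite t't. Qed.

Lemma exists_reduced s : exists2 t, word_equiv t s & reduced t.
Proof.
pose P l := exists t, word_equiv t s /\ size t = l.
have : P (size s) by exists s.
move=> /exists_minimal [_ [[t [ts <-]] t_min]]; exists t => // t' t't.
rewrite leqNgt; apply/negP => lt_t't; apply: (t_min _ lt_t't).
by exists t'; split=> // v; rewrite t't.
Qed.

Hypothesis cartan_diag : forall i, cartan alpha alphav i i = 2.

Lemma rYK i : involutive (rY alpha alphav i).
Proof.
move=> v; rewrite /rY pairZB pairZZ; have := cartan_diag i; rewrite /cartan => ->.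
set p := pairZ _ v; rewrite -addrA -opprD -scalerDl (_ : p + (p - p * 2) = 0).
  by rewrite scale0r subr0.
by ring.
Qed.

Lemma wordY_revK s : cancel (word s) (word (rev s)).
Proof. by elim: s => //= i s IH v; rewrite rev_cons wordY_rcons rYK IH. Qed.

Lemma word_equiv_rcons2 s i : word_equiv s (rcons (rcons s i) i).
Proof. by move=> v; rewrite !wordY_rcons rYK. Qed.

Lemma det_word_mx s : \det (word_mx s) = (-1) ^+ size s.
Proof.
elim: s => [|i s IH] /=; first by rewrite det1.
rewrite det_mulmx IH det_1_sub_rank1 -pairZE.
by have := cartan_diag i; rewrite /cartan => ->; rewrite exprS mulrC.
Qed.

Lemma not_reduced_rcons2 s i : ~ reduced (rcons (rcons s i) i).
Proof.
by move=> /(_ s (word_equiv_rcons2 s i)); rewrite !size_rcons ltnNge leqnSn.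
Qed.

(* The determinant of w is (-1)^length, so equivalent words have equal parity. *)
Lemma word_equiv_odd s t : word_equiv s t -> odd (size s) = odd (size t).
Proof.
move=> st; have word_mx_eq : word_mx s = word_mx t.
  by apply/row_matrixP => k; rewrite !rowE -!wordY_mx.
apply: (@signr_inj int); rewrite !signr_odd -!det_word_mx.
by rewrite word_mx_eq.
Qed.

End Reflections.

Definition letter (T : Type) (i j : T) (b : bool) := if b then i else j.

Section DihedralReduction.
Variables (m n : nat) (alpha alphav : 'I_m -> 'rV[int]_n).
Local Notation word := (wordY alpha alphav).
Local Notation cartan := (cartan alpha alphav).
Local Notation reduced := (reduced alpha alphav).
Local Notation word_equiv := (word_equiv alpha alphav).
Hypothesis cartan_diag : forall i, cartan i i = 2.

Local Notation coords i j v t ab :=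
  (coord_word (cartan i j) (cartan j i) (pairZ (alpha i) v) (pairZ (alpha j) v) t ab).

Lemma wordY_coord (i j : 'I_m) t v (A B : int) :
  word (map (letter i j) t) (v + A *: alphav i + B *: alphav j) =
  v + (coords i j v t (A, B)).1 *: alphav i + (coords i j v t (A, B)).2 *: alphav j.
Proof.
elim: t => //= b t ->; move: (cartan_diag i) (cartan_diag j); rewrite /cartan => cii cjj.
by case: b; rewrite /rY /letter /= !pairZD !pairZZ ?cii ?cjj;
  apply/rowP => k; rewrite !mxE; ring.
Qed.

Lemma word_braid i j L : coord_braid (cartan i j) (cartan j i) L ->
  word_equiv (map (letter i j) (alt_word true L)) (map (letter i j) (alt_word false L)).
Proof.
move=> braid v; have := wordY_coord i j _ v 0 0; rewrite !scale0r !addr0 => coordE.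
by rewrite !coordE braid.
Qed.

(* With a braid relation of length L <= k, the last L letters of the word
   (alt_word true k.+1) can be replaced by (alt_word false L), whose first
   letter then cancels against its neighbour. *)
Lemma alt_word_rcons_shorten i j L k :
  coord_braid (cartan i j) (cartan j i) L -> (0 < L <= k)%N ->
  exists2 t, word_equiv (map (letter i j) t) (rcons (map (letter i j) (alt_word false k)) i)
           & size t = k.-1.
Proof.
case: L => // L braid /andP[_ le_Lk].
exists (alt_word (~~ odd L) (k - L.+1) ++ alt_word false L); last first.
  by rewrite size_cat !size_alt_word; lia.
have -> : rcons (map (letter i j) (alt_word false k)) i =
    map (letter i j) (alt_word true (k - L.+1 + L.+2)).
  by rewrite (_ : _ + _ = k.+1)%N /= ?map_rcons //; lia.
rewrite alt_word_addn /= !negbK !map_cat; apply: word_equiv_catl => v.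
rewrite map_rcons wordY_rcons (_ : rcons _ false = alt_word false L.+1) //.
by rewrite -(word_braid braid) /= map_rcons wordY_rcons rYK.
Qed.

Lemma reduced_alt_word i j b tb :
  reduced (map (letter i j) tb) -> last b tb = b -> tb = alt_word b (size tb).
Proof.
elim/last_ind: tb b => [//|tb c IH] b red_tbc; rewrite last_rcons => cb; subst c.
rewrite map_rcons in red_tbc.
rewrite size_rcons /= -IH //; first exact: reduced_rcons red_tbc.
case/lastP: tb red_tbc {IH} => // tb c; rewrite last_rcons map_rcons.
by case: c b => -[] //= /(not_reduced_rcons2 cartan_diag).
Qed.

Hypotheses (cartan_offdiag : forall i j, i != j -> cartan i j <= 0)
           (cartan_eq0_sym : forall i j, cartan i j = 0 <-> cartan j i = 0).

(* The rank-two case of word_coroot_Qvplus: either the alternating word keeps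
   alpha_i^vee in the positive cone, or a braid relation shortens tb.r_i. *)
Lemma dihedral_coroot_ge0 (i j : 'I_m) tb : i != j ->
  reduced (map (letter i j) tb) -> reduced (rcons (map (letter i j) tb) i) ->
  exists a b : nat,
    word (map (letter i j) tb) (alphav i) = a%:Z *: alphav i + b%:Z *: alphav j.
Proof.
move=> neq_ij red_tb red_tbi.
have tbE : tb = alt_word false (size tb).
  apply: reduced_alt_word red_tb _; case/lastP: tb red_tbi => // tb c.
  by rewrite last_rcons map_rcons; case: c => //= /(not_reduced_rcons2 cartan_diag).
have cartan_ij_eq0 : (cartan i j == 0) = (cartan j i == 0).
  by apply/eqP/eqP => /cartan_eq0_sym.
have [ge0|[L L_bnd braid]] := rank2_dichotomy (size tb) (cartan_offdiag neq_ij)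
    (cartan_offdiag (contra_neq esym neq_ij)) cartan_ij_eq0.
  have := wordY_coord i j tb 0 1 0; rewrite !pairZ0 add0r scale1r scale0r addr0 => ->.
  move: ge0; rewrite /alt_coord_ge0 -tbE; set ab := coord_word _ _ _ _ tb _ => -[ge0_a ge0_b].
  by exists `|ab.1|%N, `|ab.2|%N; rewrite !gez0_abs // add0r.
have [t t_equiv size_t] := alt_word_rcons_shorten braid L_bnd.
rewrite -tbE in t_equiv; have := red_tbi _ t_equiv.
by rewrite !size_map size_rcons size_t size_map ltnNge leq_pred.
Qed.

End DihedralReduction.

Section CorootPositivity.
Variables (m n : nat) (alpha alphav : 'I_m -> 'rV[int]_n).
Local Notation word := (wordY alpha alphav).
Local Notation reduced := (reduced alpha alphav).
Local Notation word_equiv := (word_equiv alpha alphav).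
Implicit Types (s t : seq 'I_m) (x z : 'rV[int]_n).

Definition Qvplus z := exists c : 'I_m -> nat, z = \sum_(i < m) (c i)%:Z *: alphav i.

Lemma Qvplus0 : Qvplus 0.
Proof. by exists (fun=> 0%N); rewrite big1 // => i _; rewrite scale0r. Qed.

Lemma Qvplus_coroot i : Qvplus (alphav i).
Proof.
exists (fun l => nat_of_bool (l == i)); rewrite (bigD1 i) //= eqxx scale1r big1 ?addr0 //.
by move=> l /negbTE ->; rewrite scale0r.
Qed.

Lemma QvplusD x z : Qvplus x -> Qvplus z -> Qvplus (x + z).
Proof.
move=> [c ->] [d ->]; exists (fun l => (c l + d l)%N); rewrite -big_split /=.
by apply: eq_bigr => l _; rewrite PoszD scalerDl.
Qed.

Lemma QvplusZ (a : nat) z : Qvplus z -> Qvplus (a%:Z *: z).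
Proof.
move=> [c ->]; exists (fun l => (a * c l)%N); rewrite scaler_sumr.
by apply: eq_bigr => l _; rewrite scalerA PoszM.
Qed.

Hypothesis cartan_diag : forall i, cartan alpha alphav i i = 2.

(* Choosing v of minimal length makes it minimal in its coset v <r_i, r_j>,
   which forces v r_i and v r_j to be reduced. *)
Lemma reduced_coset_factor s i j : reduced (rcons s j) ->
  exists v tb, [/\ word_equiv (v ++ map (letter i j) tb) (rcons s j),
    (size v + size tb = (size s).+1)%N, (size v <= size s)%N &
    forall b, reduced (rcons v (letter i j b))].
Proof.
move=> red_sj.
pose P l := exists v tb, [/\ word_equiv (v ++ map (letter i j) tb) (rcons s j),
  (size v + size tb = (size s).+1)%N & size v = l].
have P_s : P (size s) by exists s, [:: false]; split; rewrite ?addn1 // cats1.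
have [_ [[v [tb [v_tb size_v_tb <-]]] v_min]] := exists_minimal P_s.
exists v, tb; split=> //; first by rewrite leqNgt; apply/negP => /v_min.
move=> b t t_equiv; rewrite leqNgt; apply/negP; rewrite size_rcons => lt_t_v1.
have := word_equiv_odd cartan_diag t_equiv; rewrite size_rcons /= => odd_t.
have neq_t_v : size t != size v.
  by apply/eqP => eq_t_v; move: odd_t; rewrite eq_t_v; case: odd.
have t_tb : word_equiv (t ++ map (letter i j) (b :: tb)) (rcons s j).
  by move=> x; rewrite -v_tb !wordY_cat /= t_equiv wordY_rcons rYK.
have := red_sj _ t_tb; rewrite size_cat /= size_map size_rcons => le_s_t_tb.
apply: (v_min (size t)); first lia.
by exists t, (b :: tb); split=> //=; lia.
Qed.

Hypotheses (cartan_offdiag : forall i j, i != j -> cartan alpha alphav i j <= 0)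
  (cartan_eq0_sym : forall i j, cartan alpha alphav i j = 0 <-> cartan alpha alphav j i = 0).

Lemma word_coroot_Qvplus s i : reduced (rcons s i) -> Qvplus (word s (alphav i)).
Proof.
have [k] := ubnP (size s); elim: k s i => // k IH s i.
case/lastP: s => [_ _|s j]; first exact: Qvplus_coroot.
rewrite size_rcons ltnS => lt_s_k red_sji.
have neq_ij : i != j by apply/eqP => eq_ij; subst j; apply: not_reduced_rcons2 red_sji.
have [v [tb [v_tb size_v_tb le_v_s red_v]]] := reduced_coset_factor i (reduced_rcons red_sji).
have red_tb : reduced (map (letter i j) tb).
  apply: (reduced_catr (s := v)); apply: reduced_equiv (reduced_rcons red_sji) v_tb _.
  by rewrite size_cat size_map size_rcons.
have red_tbi : reduced (rcons (map (letter i j) tb) i).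
  apply: (reduced_catr (s := v)); rewrite -rcons_cat.
  apply: reduced_equiv red_sji (word_equiv_rcons i v_tb) _.
  by rewrite !size_rcons size_cat size_map size_v_tb.
have [a [b ab]] :=
  dihedral_coroot_ge0 cartan_diag cartan_offdiag cartan_eq0_sym neq_ij red_tb red_tbi.
rewrite -v_tb wordY_cat ab wordYD !wordYZ.
have lt_v_k : (size v < k)%N by apply: leq_ltn_trans lt_s_k.
by apply: QvplusD; apply: QvplusZ; [apply: IH (red_v true) | apply: IH (red_v false)].
Qed.

Definition dominant x := forall i, 0 <= pairZ (alpha i) x.

Lemma dominant_leQv_orbit x s : dominant x -> leQv alphav (word s x) x.
Proof.
move=> dom_x; have [t ts red_t] := exists_reduced alpha alphav s; rewrite /leQv -ts.
elim/last_ind: t red_t {ts} => [_|t i IH red_ti]; first by rewrite subrr; apply: Qvplus0.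
rewrite wordY_rcons /rY wordYB wordYZ opprB addrA addrAC -(gez0_abs (dom_x i)).
exact: QvplusD (IH (reduced_rcons red_ti)) (QvplusZ _ (word_coroot_Qvplus red_ti)).
Qed.

End CorootPositivity.

Lemma free_family_coef_eq m n (f : 'I_m -> 'rV[int]_n) (c d : 'I_m -> int) :
  free_family f -> \sum_i c i *: f i = \sum_i d i *: f i -> c =1 d.
Proof.
move=> free_f cd i; apply/eqP; rewrite -subr_eq0; apply/eqP.
have sum_cd : \sum_l (c l - d l) *: f l = 0.
  by under eq_bigr do rewrite scalerBl; rewrite sumrB cd subrr.
exact: free_f sum_cd i.
Qed.

Section Chamber.
Variables (m n : nat) (alpha : 'I_m -> 'rV[int]_n).
Hypothesis free_alpha : free_family alpha.

Definition rat_mx : 'M[rat]_(m, n) := \matrix_(i, k) (alpha i 0 k)%:~R.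

(* Z-freeness gives Q-freeness after clearing denominators. *)
Lemma row_free_rat_mx : row_free rat_mx.
Proof.
apply: inj_row_free => v v_rat_mx.
pose D : int := \prod_(l < m) denq (v 0 l).
have D_neq0 : (D%:~R : rat) != 0.
  by rewrite intr_eq0 /D; apply/prodf_neq0 => l _; apply: denq_neq0.
pose c i : int := numq (v 0 i) * \prod_(l < m | l != i) denq (v 0 l).
have cE i : (c i)%:~R = v 0 i * D%:~R :> rat.
  by rewrite /c /D [in RHS](bigD1 i) //= !intrM numqE -mulrA.
have c_alpha : \sum_(i < m) c i *: alpha i = 0.
  apply/rowP => k; rewrite !mxE summxE; apply: (@intr_inj rat).
  rewrite rmorph_sum rmorph0 /=.
  have := congr1 (fun M : 'rV[rat]_n => M 0 k * D%:~R) v_rat_mx.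
  rewrite /= !mxE mul0r => sum_v0; rewrite -[RHS]sum_v0 mulr_suml.
  by apply: eq_bigr => i _; rewrite !mxE intrM cE; ring.
apply/rowP => i; rewrite mxE; have /(congr1 (fun z => z%:~R : rat)) := free_alpha c_alpha i.
by rewrite cE rmorph0 => /eqP; rewrite mulf_eq0 (negbTE D_neq0) orbF => /eqP.
Qed.

Variable R : realFieldType.
Implicit Types u v : 'rV[R]_n.

Lemma pairR_map (a z : 'rV[int]_n) : pairR a (map_mx (intr : int -> R) z) = (pairZ a z)%:~R.
Proof. by rewrite /pairR /pairZ rmorph_sum; apply: eq_bigr => k _; rewrite mxE rmorphM. Qed.

Lemma pairRD (a : 'rV[int]_n) u v : pairR a (u + v) = pairR a u + pairR a v.
Proof. by rewrite /pairR -big_split /=; apply: eq_bigr => k _; rewrite mxE mulrDr. Qed.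

Lemma pairRZ (a : 'rV[int]_n) (t : R) v : pairR a (t *: v) = t * pairR a v.
Proof. by rewrite /pairR mulr_sumr; apply: eq_bigr => l _; rewrite mxE mulrCA. Qed.

(* A solution of u *m A^T = (1, ..., 1) exists since A has full row rank. *)
Lemma exists_in_Cf : exists u, in_Cf alpha u.
Proof.
pose AR := map_mx (@ratr R) rat_mx.
have full : row_full AR^T.
  by rewrite /row_full mxrank_tr mxrank_map; apply: row_free_rat_mx.
have /submxP [u uE] := submx_full (const_mx 1 : 'rV[R]_m) full.
exists u => i; suff -> : pairR (alpha i) u = 1 by apply: ltr01.
transitivity ((u *m AR^T) 0 i); last by rewrite -uE mxE.
by rewrite /pairR mxE; apply: eq_bigr => k _; rewrite !mxE ratr_int mulrC.
Qed.

Lemma closure_Cf_pairR_ge0 u i : in_closure_Cf alpha u -> 0 <= pairR (alpha i) u.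
Proof.
move=> u_cl; rewrite leNgt; apply/negP => u_neg.
pose M := \sum_k `|(alpha i 0 k)%:~R : R|.
have M_ge0 : 0 <= M by apply: sumr_ge0.
pose e := - pairR (alpha i) u / (M + 1).
have e_gt0 : 0 < e by rewrite divr_gt0 ?oppr_gt0 //; lra.
have [u' [u'_Cf u'_near]] := u_cl e e_gt0.
have pairR_near : pairR (alpha i) u' - pairR (alpha i) u <= M * e.
  rewrite /pairR -sumrB /M mulr_suml; apply: ler_sum => k _.
  rewrite -mulrBr; apply: le_trans (ler_norm _) _.
  by rewrite normrM ler_wpM2l // ltW.
have Me_lt : M * e < - pairR (alpha i) u.
  by rewrite /e mulrA ltr_pdivrMr ?mulrDr ?mulr1 ?[_ * M]mulrC ?ltrDl; lra.
by have := u'_Cf i; lra.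
Qed.

Lemma dominant_in_closure_Cf z :
  dominant alpha z -> in_closure_Cf alpha (map_mx (intr : int -> R) z).
Proof.
move=> dom_z e e_gt0; have [u0 u0_Cf] := exists_in_Cf.
pose M := \sum_k `|u0 0 k|.
have M_ge0 : 0 <= M by apply: sumr_ge0.
pose t := e / (M + 1).
have t_gt0 : 0 < t by rewrite divr_gt0 //; lra.
exists (map_mx intr z + t *: u0); split=> [i|k].
  rewrite pairRD pairRZ pairR_map.
  have := mulr_gt0 t_gt0 (u0_Cf i); have := dom_z i; rewrite -(ler0z R); lra.
rewrite !mxE addrAC subrr add0r normrM gtr0_norm //.
have u0k_le : `|u0 0 k| <= M by rewrite /M (bigD1 k) //= lerDl sumr_ge0.
have tM_lt : t * M < e by rewrite /t mulrAC ltr_pdivrMr //; nra.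
by have := ler_wpM2l (ltW t_gt0) u0k_le; lra.
Qed.

End Chamber.

Section RealReflections.
Variables (R : realFieldType) (m n : nat) (alpha alphav : 'I_m -> 'rV[int]_n).
Hypothesis cartan_diag : forall i, cartan alpha alphav i i = 2.
Local Notation map_R := (map_mx (intr : int -> R)).

Lemma wordR_map s z : wordR alpha alphav s (map_R z) = map_R (wordY alpha alphav s z).
Proof.
elim: s => //= i s ->; rewrite /rR /rY pairR_map.
by apply/rowP => k; rewrite !mxE intrD intrN intrM.
Qed.

Lemma rRK i : involutive (rR alpha alphav i : 'rV[R]_n -> 'rV[R]_n).
Proof.
move=> v; have alpha_coroot : pairR (alpha i) (map_R (alphav i)) = 2.
  by rewrite pairR_map; have := cartan_diag i; rewrite /cartan => ->.
rewrite /rR -scaleNr pairRD pairRZ alpha_coroot.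
by apply/rowP => k; rewrite !mxE; ring.
Qed.

Lemma wordR_revK s :
  cancel (wordR alpha alphav s) (wordR alpha alphav (rev s) : 'rV[R]_n -> _).
Proof.
by elim: s => //= i s IH v; rewrite rev_cons /wordR -cats1 foldr_cat /= rRK; apply: IH.
Qed.

End RealReflections.

Section HeightDescent.
Variables (m n : nat) (alpha alphav : 'I_m -> 'rV[int]_n).
Hypothesis free_alphav : free_family alphav.

(* y - r_i z = (y - z) + alpha_i(z) alpha_i^vee: the height (sum of the
   coordinates) drops when alpha_i(z) < 0. *)
Lemma height_rY_lt y z i (c c' : 'I_m -> nat) :
  y - z = \sum_l (c l)%:Z *: alphav l ->
  y - rY alpha alphav i z = \sum_l (c' l)%:Z *: alphav l ->
  pairZ (alpha i) z < 0 -> (\sum_l c' l < \sum_l c l)%N.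
Proof.
set p := pairZ _ z => cE c'E p_lt0.
have c'_cE : forall l, (c' l)%:Z = (c l)%:Z + (if l == i then p else 0).
  apply: free_family_coef_eq free_alphav _.
  under [RHS]eq_bigr do rewrite scalerDl.
  rewrite big_split /= -cE -c'E (bigD1 i) //= eqxx big1 ?addr0 => [|l /negbTE ->]; last first.
    exact: scale0r.
  by rewrite /rY -/p opprB addrA addrAC.
have PoszE (F : 'I_m -> nat) : ((\sum_l F l)%N)%:Z = \sum_l (F l)%:Z.
  exact: (big_morph _ PoszD (erefl : Posz 0 = 0)).
rewrite -ltz_nat !PoszE (eq_bigr _ (fun l _ => c'_cE l)) big_split /=.
by rewrite -big_mkcond big_pred1_eq gtrDl.
Qed.

Lemma bounded_orbit_dominant x y : (forall s, leQv alphav (wordY alpha alphav s x) y) ->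
  exists s, dominant alpha (wordY alpha alphav s x).
Proof.
move=> x_le_y; have [c0 c0E] := x_le_y [::].
suff /(_ _ [::] c0 c0E erefl) : forall h s (c : 'I_m -> nat),
    y - wordY alpha alphav s x = \sum_l (c l)%:Z *: alphav l -> (\sum_l c l)%N = h ->
    exists s, dominant alpha (wordY alpha alphav s x) by [].
elim/ltn_ind => h IH s c cE sum_c.
have [dom|] := boolP [forall i, 0 <= pairZ (alpha i) (wordY alpha alphav s x)].
  by exists s => i; apply: (forallP dom).
rewrite negb_forall => /existsP [i]; rewrite -ltNge => neg_i.
have [c' c'E] := x_le_y (i :: s).
apply: (IH _ _ (i :: s) c' c'E erefl); rewrite -sum_c.
exact: height_rY_lt cE c'E neg_i.
Qed.

End HeightDescent.

Theorem mainTheorem4 (R : realFieldType) (m n : nat)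
  (alpha alphav : 'I_m -> 'rV[int]_n)
  (hGCM : is_GCM (cartan alpha alphav))
  (hfree : free_family alpha) (hfreev : free_family alphav)
  (x : 'rV[int]_n) :
  (exists y : 'rV[int]_n, forall s : seq 'I_m,
      leQv alphav (wordY alpha alphav s x) y)
  <-> in_Yplus R m n alpha alphav x.
Proof.
have [cartan_diag cartan_offdiag cartan_eq0_sym] := hGCM.
split=> [[y x_le_y]|[s [u [u_cl xE]]]].
  have [s s_dom] := bounded_orbit_dominant hfreev x_le_y.
  exists (rev s), (map_mx intr (wordY alpha alphav s x)).
  split; first exact: dominant_in_closure_Cf.
  by rewrite wordR_map wordY_revK.
set x0 := wordY alpha alphav (rev s) x.
have uE : u = map_mx intr x0 by rewrite -wordR_map xE wordR_revK.
have x0_dom : dominant alpha x0.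
  by move=> i; have := closure_Cf_pairR_ge0 i u_cl; rewrite uE pairR_map ler0z.
exists x0 => t; rewrite -{1}[x](wordY_revK cartan_diag (rev s)) revK -wordY_cat.
exact: dominant_leQv_orbit.
Qed.
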